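(* Let $\mathcal{I}$ be a $\sigma$-ideal on $\mathbb{R}$ satisfying the standing assumptions. Let $B\subseteq\mathbb{R}$ be a Borel set with $B\notin\mathcal{I}$ and let $D\subseteq\mathbb{R}$ be a countable dense set. Then $B+D=\{b+d: b\in B, d\in D\}$ is $\mathcal{I}$-residual, i.e. $\mathbb{R}\setminus(B+D)\in\mathcal{I}$.
   Context: Standing assumptions on $\mathcal{I}$: $\mathcal{I}$ is a $\sigma$-ideal of subsets of $\mathbb{R}$ (closed under subsets and countable unions) such that: $\mathbb{R}\notin\mathcal{I}$; $x+I\in\mathcal{I}$ and $xI=\{xi:i\in I\}\in\mathcal{I}$ for all $x\in\mathbb{R}$, $I\in\mathcal{I}$; every $I\in\mathcal{I}$ is contained in a Borel set belonging to $\mathcal{I}$; and (Steinhaus property) for all Borel sets $A,B\notin\mathcal{I}$ the set $A-B=\{a-b:a\in A,b\in B\}$ has nonempty interior. A set is $\mathcal{I}$-residual if its complement belongs to $\mathcal{I}$. *)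

From Stdlib Require Import Reals.
Open Scope R_scope.

Definition rset := R -> Prop.

Definition subset (A B : rset) : Prop := forall x, A x -> B x.

Definition is_open (U : rset) : Prop :=
  forall x, U x -> exists eps, 0 < eps /\ forall y, Rabs (y - x) < eps -> U y.

Inductive Borel : rset -> Prop :=
| Borel_open : forall U, is_open U -> Borel U
| Borel_compl : forall A, Borel A -> Borel (fun x => ~ A x)
| Borel_cunion : forall A : nat -> rset,
    (forall n, Borel (A n)) -> Borel (fun x => exists n, A n x).

Definition translate (x : R) (A : rset) : rset := fun y => exists a, A a /\ y = x + a.
Definition scale (x : R) (A : rset) : rset := fun y => exists a, A a /\ y = x * a.
Definition set_minus_set (A B : rset) : rset :=
  fun y => exists a b, A a /\ B b /\ y = a - b.
Definition set_plus_set (A B : rset) : rset :=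
  fun y => exists a b, A a /\ B b /\ y = a + b.

Definition has_nonempty_interior (A : rset) : Prop :=
  exists x eps, 0 < eps /\ forall y, Rabs (y - x) < eps -> A y.

Definition sigma_ideal (I : rset -> Prop) : Prop :=
  I (fun _ => False) /\
  (forall A B, I A -> subset B A -> I B) /\
  (forall A : nat -> rset, (forall n, I (A n)) -> I (fun x => exists n, A n x)).

Definition standing_assumptions (I : rset -> Prop) : Prop :=
  sigma_ideal I /\
  ~ I (fun _ => True) /\
  (forall x A, I A -> I (translate x A)) /\
  (forall x A, I A -> I (scale x A)) /\
  (forall A, I A -> exists B, Borel B /\ subset A B /\ I B) /\
  (forall A B, Borel A -> Borel B -> ~ I A -> ~ I B ->
     has_nonempty_interior (set_minus_set A B)).

Definition countable (D : rset) : Prop :=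
  exists f : nat -> R, forall d, D d -> exists n, f n = d.

Definition dense (D : rset) : Prop :=
  forall x eps, 0 < eps -> exists d, D d /\ Rabs (d - x) < eps.

Definition I_residual (I : rset -> Prop) (A : rset) : Prop := I (fun x => ~ A x).

(* If the complement C of B + D were not in I, then C and B would be two Borel
   sets outside I (B + D is Borel, being a countable union of translates of B),
   so by the Steinhaus property C - B contains an open interval, which meets the
   dense set D. But c - b = d with d in D puts c = b + d in B + D, a contradiction. *)
From Stdlib Require Import Reals Lra Classical FunctionalExtensionality PropExtensionality.
Open Scope R_scope.

Lemma Borel_ext (A A' : rset) : (forall x, A x <-> A' x) -> Borel A -> Borel A'.
Proof.
  intros HAA' HA.
  replace A' with A; [exact HA |].
  apply functional_extensionality; intro x; apply propositional_extensionality; auto.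
Qed.

Lemma Borel_empty : Borel (fun _ => False).
Proof. apply Borel_open; intros x []. Qed.

Lemma Borel_translate (d : R) (A : rset) : Borel A -> Borel (translate d A).
Proof.
  intro HA.
  apply Borel_ext with (fun y => A (y - d)).
  { intro y; split.
    - intro Hy; exists (y - d); split; [exact Hy | ring].
    - intros [a [Ha ->]]; replace (d + a - d) with a by ring; exact Ha. }
  clear -HA; revert d.
  induction HA as [U HU | A _ IH | A _ IH]; intro d.
  - apply Borel_open; intros x Hx.
    destruct (HU _ Hx) as [e [He HUe]].
    exists e; split; [exact He |]; intros y Hy; apply HUe.
    replace (y - d - (x - d)) with (y - x) by ring; exact Hy.
  - exact (Borel_compl _ (IH d)).
  - exact (Borel_cunion (fun n y => A n (y - d)) (fun n => IH n d)).
Qed.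

Lemma Borel_plus_countable (B D : rset) :
  Borel B -> countable D -> Borel (set_plus_set B D).
Proof.
  intros HB [f Hf].
  (* [f] enumerates a superset of [D], so the terms [f n] outside [D] are discarded. *)
  apply Borel_ext with (fun y => exists n, D (f n) /\ translate (f n) B y).
  { intro y; split.
    - intros [n [Hn [b [Hb ->]]]]; exists b, (f n); repeat split; auto; ring.
    - intros [b [d [Hb [Hd ->]]]]; destruct (Hf d Hd) as [n <-].
      exists n; split; [exact Hd |]; exists b; split; [exact Hb | ring]. }
  apply Borel_cunion; intro n.
  destruct (classic (D (f n))) as [Hn | Hn].
  - apply Borel_ext with (translate (f n) B); [intro y; tauto |].
    exact (Borel_translate _ _ HB).
  - apply Borel_ext with (fun _ => False); [intro y; tauto | exact Borel_empty].
Qed.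

Lemma dense_meets_interior (D S : rset) :
  dense D -> has_nonempty_interior S -> exists d, D d /\ S d.
Proof.
  intros HD [x [e [He HS]]].
  destruct (HD x e He) as [d [Hd Hdx]].
  exists d; split; [exact Hd | exact (HS d Hdx)].
Qed.

Lemma compl_plus_minus_disjoint (B D : rset) (d : R) :
  D d -> ~ set_minus_set (fun x => ~ set_plus_set B D x) B d.
Proof.
  intros Hd [c [b [Hc [Hb Hcb]]]].
  apply Hc; exists b, d; repeat split; auto; lra.
Qed.

Theorem mainTheorem1 (I : rset -> Prop) (B D : rset) :
  standing_assumptions I ->
  Borel B -> ~ I B ->
  countable D -> dense D ->
  I_residual I (set_plus_set B D).
Proof.
  intros [_ [_ [_ [_ [_ Hsteinhaus]]]]] HB HIB HDcount HDdense.
  apply NNPP; intro HIC.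
  assert (HC : Borel (fun x => ~ set_plus_set B D x))
    by exact (Borel_compl _ (Borel_plus_countable B D HB HDcount)).
  destruct (dense_meets_interior D _ HDdense (Hsteinhaus _ _ HC HB HIC HIB))
    as [d [Hd Hdiff]].
  exact (compl_plus_minus_disjoint B D d Hd Hdiff).
Qed.
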